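(* Let $k\geq 2$ be an integer. For every finite simple graph $G$ with minimum degree $\delta(G)\geq k-1$, $$\gamma_{\times k}(G)\leq k\,\gamma_{k}(G)-(k-1)^2.$$
   Context: All graphs are finite and simple, with vertex set $V(G)$. For $v\in V(G)$, $N(v)$ is its open neighbourhood, and for $D\subseteq V(G)$, $\deg_D(v)=|N(v)\cap D|$. $\delta(G)$ denotes the minimum degree of $G$. A set $D\subseteq V(G)$ is a $k$-dominating set of $G$ if $\deg_D(v)\geq k$ for every $v\in V(G)\setminus D$; the $k$-domination number $\gamma_k(G)$ is the minimum cardinality of a $k$-dominating set. For a positive integer $k\leq \delta(G)+1$, a $k$-tuple dominating set of $G$ is a $k$-dominating set $D$ such that additionally $\deg_D(v)\geq k-1$ for every $v\in D$ (equivalently, every vertex has at least $k$ vertices of $D$ in its closed neighbourhood); the $k$-tuple domination number $\gamma_{\times k}(G)$ is the minimum cardinality of a $k$-tuple dominating set. *)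

From mathcomp Require Import all_boot all_order all_algebra.
Set Implicit Arguments. Unset Strict Implicit. Unset Printing Implicit Defensive.

Definition simple_graph (T : finType) (e : rel T) : Prop :=
  symmetric e /\ irreflexive e.

Definition nbhd (T : finType) (e : rel T) (v : T) : {set T} := [set u | e v u].

Definition degIn (T : finType) (e : rel T) (D : {set T}) (v : T) : nat :=
  #|nbhd e v :&: D|.

Definition min_degree_ge (T : finType) (e : rel T) (m : nat) : Prop :=
  forall v : T, m <= #|nbhd e v|.

Definition k_dominating (T : finType) (e : rel T) (k : nat) (D : {set T}) : bool :=
  [forall v, (v \notin D) ==> (k <= degIn e D v)].

Definition k_tuple_dominating (T : finType) (e : rel T) (k : nat) (D : {set T}) : bool :=
  k_dominating e k D && [forall v, (v \in D) ==> (k.-1 <= degIn e D v)].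

(* minimum cardinality; [set: T] always qualifies as a k-dominating set, and as a
   k-tuple dominating set when delta(G) >= k-1, so the default #|T| is never the
   artificial value under the theorem's hypotheses. *)
Definition gamma_k (T : finType) (e : rel T) (k : nat) : nat :=
  \big[minn/#|T|]_(D : {set T} | k_dominating e k D) #|D|.

Definition gamma_xk (T : finType) (e : rel T) (k : nat) : nat :=
  \big[minn/#|T|]_(D : {set T} | k_tuple_dominating e k D) #|D|.

From mathcomp Require Import all_boot all_order all_algebra.
From mathcomp Require Import zify.
Import Order.TTheory Num.Theory.

(* Fix a minimum k-dominating set D, so #|D| = gamma_k and
   k <= #|D|.  Vertices of D may lack k-1 neighbours inside D; a "completion"
   of D is a set X outside D such that every vertex of D has at least k-1
   neighbours in D :|: X.  For any completion, D :|: X is k-tuple dominating,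
   so gamma_xk <= #|D| + #|X|.  Take X a completion of minimum size.  Call a
   vertex t of D tight if it has at most k-1 neighbours in D :|: X.  By
   minimality, every x in X is adjacent to a tight vertex, which gives
   #|X| <= (k-1) * #tight.  Since X avoids D, each x in X has at least k
   neighbours in D; double counting the edges between X and D gives
   k * #|X| <= (k-1) * #tight + #|D :\: tight| * #|X|.  An elementary
   arithmetic lemma turns these two inequalities, together with k <= #|D|,
   into #|X| + (k-1)^2 <= (k-1) * #|D|, which is the theorem. *)

(* The arithmetic core, with c = k-1, g = #|D|, t = #tight, a = #|D| - t and
   m = #|X|.  If a >= c then m <= t*c <= (g-c)*c; otherwise (c+1-a) * m <= t*c
   and g - a <= (c+1-a) * (g-c) give m <= c * (g-c) again. *)
Lemma tight_count_arith {c g t a m : nat} :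
  c < g -> t + a = g -> m <= t * c -> c.+1 * m <= t * c + a * m ->
  m + c ^ 2 <= c * g.
Proof. by move=> lt_cg def_g m_le m_le'; have [le_ca | lt_ac] := leqP c a; nia. Qed.

Lemma bigminn_le {I : finType} {P : pred I} (F : I -> nat) (x0 : nat) {j : I} :
  P j -> \big[minn/x0]_(i | P i) F i <= F j.
Proof. by move=> Pj; rewrite -minEnat; have := bigmin_le_cond x0 F Pj. Qed.

Lemma bigminn_attained {I : finType} {P : pred I} (F : I -> nat) (x0 : nat) {j : I} :
  P j -> (forall i, P i -> F i <= x0) ->
  exists2 i, P i & \big[minn/x0]_(i | P i) F i = F i.
Proof.
move=> Pj F_le; rewrite -minEnat.
by have [i Pi ->] := eq_bigmin j P F Pj F_le; exists i.
Qed.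

Section Domination.
Variables (T : finType) (e : rel T).

Lemma degIn_sum (A : {set T}) (v : T) : degIn e A v = \sum_(u in A) e v u.
Proof.
rewrite /degIn -sum1_card [LHS]big_mkcond [RHS]big_mkcond /=.
by apply: eq_bigr => u _; rewrite /nbhd !inE; case: (e v u); case: (u \in A).
Qed.

Lemma degIn_setU1 (B : {set T}) (x v : T) : degIn e (x |: B) v <= degIn e B v + e v x.
Proof.
rewrite /degIn setIUr addnC; apply: leq_trans (leq_card_setU _ _).1 _.
rewrite leq_add2r; have [evx | nevx] := boolP (e v x).
  by rewrite (setIidPr _) ?cards1 // sub1set /nbhd inE.
rewrite leqn0 cards_eq0; apply/eqP/setP => y; rewrite /nbhd !inE.
by apply/andP => -[evy /eqP yx]; move: nevx; rewrite -yx evy.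
Qed.

Lemma degIn_subset {A B : {set T}} (v : T) :
  A \subset B -> degIn e A v <= degIn e B v.
Proof. by move=> sAB; apply/subset_leq_card/setIS. Qed.

Lemma sum_degIn_sym (A B : {set T}) : symmetric e ->
  \sum_(x in A) degIn e B x = \sum_(y in B) degIn e A y.
Proof.
move=> e_sym; under eq_bigr => x _ do rewrite degIn_sum.
rewrite exchange_big /=; apply: eq_bigr => y _.
by rewrite degIn_sum; apply: eq_bigr => x _; rewrite e_sym.
Qed.

Variable k : nat.

Lemma k_dominating_setT : k_dominating e k [set: T].
Proof. by apply/forallP => v; rewrite in_setT. Qed.

Lemma gamma_k_attained : exists2 D, k_dominating e k D & #|D| = gamma_k e k.
Proof.
have [D Ddom minD] := bigminn_attained (fun D : {set T} => #|D|) #|T|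
  k_dominating_setT (fun D _ => max_card D).
by exists D => //; rewrite minD.
Qed.

Lemma gamma_xk_le {D : {set T}} : k_tuple_dominating e k D -> gamma_xk e k <= #|D|.
Proof. exact: bigminn_le. Qed.

(* When delta >= k-1, every k-dominating set has at least k vertices: either
   some vertex lies outside it, or it contains a closed neighbourhood. *)
Lemma k_le_card_k_dominating {D : {set T}} :
  irreflexive e -> 0 < #|T| -> min_degree_ge e k.-1 -> k_dominating e k D ->
  k <= #|D|.
Proof.
move=> e_irr T_gt0 mindeg /forallP Ddom.
have [v vD | allD] := pickP (fun v => v \notin D).
  by apply: leq_trans (implyP (Ddom v) vD) _; apply/subset_leq_card/subsetIr.
have [v0 _] := card_gt0P T_gt0.
have v0_notin : v0 \notin nbhd e v0 by rewrite /nbhd inE e_irr.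
have : #|v0 |: nbhd e v0| <= #|D|.
  by apply/subset_leq_card/subsetP => x _; move: (allD x) => /=; case: (x \in D).
by rewrite cardsU1 v0_notin; have := mindeg v0; lia.
Qed.

Section Completion.
Variable D : {set T}.

Definition completes (X : {set T}) : bool :=
  (X \subset ~: D) && [forall v in D, k.-1 <= degIn e (D :|: X) v].

Definition tight (X : {set T}) : {set T} :=
  [set t in D | degIn e (D :|: X) t <= k.-1].

Lemma completes_setC : min_degree_ge e k.-1 -> completes (~: D).
Proof.
move=> mindeg; rewrite /completes subxx /=.
by apply/forall_inP => v _; rewrite /degIn setUCr setIT.
Qed.

Lemma tight_subset (X : {set T}) : tight X \subset D.
Proof. by apply/subsetP => t; rewrite inE => /andP []. Qed.

Lemma card_tight_split (X : {set T}) : #|tight X| + #|D :\: tight X| = #|D|.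
Proof. by rewrite -(cardsID (tight X) D) (setIidPr (tight_subset X)). Qed.

Lemma degIn_tight {X : {set T}} {t : T} :
  t \in tight X -> degIn e X t <= k.-1.
Proof.
rewrite inE => /andP [_ t_le].
exact: leq_trans (degIn_subset t (subsetUr D X)) t_le.
Qed.

Hypothesis e_sym : symmetric e.

(* Each vertex x of a minimum completion X is adjacent to a tight vertex:
   X :\ x is not a completion, so some v in D loses a neighbour when x is
   removed; that neighbour is x, and v is left with at most k-1 neighbours. *)
Lemma minimum_completion_tight {X : {set T}} {x : T} :
  completes X -> (forall Y, completes Y -> #|X| <= #|Y|) -> x \in X ->
  exists2 t, t \in tight X & e x t.
Proof.
move=> /andP [XsubC Xcov] Xmin xX.
have : ~~ completes (X :\ x).
  by apply/negP => /Xmin; rewrite (cardsD1 x X) xX; lia.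
rewrite /completes (subset_trans (subsetDl X [set x]) XsubC) /=.
case/forall_inPn => v vD; rewrite -ltnNge => lt_v.
have le_v := forall_inP Xcov v vD.
have drop_x : degIn e (D :|: X) v <= degIn e (D :|: X :\ x) v + e v x.
  apply: leq_trans (degIn_setU1 _ _ _); apply: degIn_subset.
  by apply/subsetP => y; rewrite !inE; case: (y == x).
have evx : e v x by case: (e v x) drop_x => /=; lia.
exists v; last by rewrite e_sym.
by rewrite inE vD /=; rewrite evx /= in drop_x; lia.
Qed.

(* First count: every vertex of a minimum completion sees a tight vertex, and
   a tight vertex sees at most k-1 vertices of X. *)
Lemma card_minimum_completion {X : {set T}} :
  completes X -> (forall Y, completes Y -> #|X| <= #|Y|) ->
  #|X| <= #|tight X| * k.-1.
Proof.
move=> Xcomp Xmin.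
have sees_tight x : x \in X -> 0 < degIn e (tight X) x.
  move=> xX; have [t tT ext] := minimum_completion_tight Xcomp Xmin xX.
  by apply/card_gt0P; exists t; rewrite inE /nbhd inE ext.
rewrite -sum1_card (@leq_trans (\sum_(x in X) degIn e (tight X) x)) //.
  exact: leq_sum sees_tight.
rewrite sum_degIn_sym // -sum_nat_const; exact: leq_sum (fun t => degIn_tight).
Qed.

Hypothesis Ddom : k_dominating e k D.

Lemma degIn_outside {v : T} : v \notin D -> k <= degIn e D v.
Proof. by move=> vD; move/forallP: Ddom => /(_ v) /implyP; apply. Qed.

Lemma completes_k_tuple {X : {set T}} :
  completes X -> k_tuple_dominating e k (D :|: X).
Proof.
move=> /andP [XsubC /forall_inP Xcov].
have D_sub : D \subset D :|: X := subsetUl D X.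
apply/andP; split; apply/forallP => v; apply/implyP.
  rewrite inE negb_or => /andP [vD _].
  exact: leq_trans (degIn_outside vD) (degIn_subset v D_sub).
case/setUP => [vD | vX]; first exact: Xcov.
have vD : v \notin D by have := subsetP XsubC v vX; rewrite inE.
apply: leq_trans (leq_pred k) _.
exact: leq_trans (degIn_outside vD) (degIn_subset v D_sub).
Qed.

(* Second count: the edges between X and D, seen from X (at least k each) and
   from D (at most k-1 at tight vertices, at most #|X| elsewhere). *)
Lemma double_count_completion {X : {set T}} :
  completes X -> k * #|X| <= #|tight X| * k.-1 + #|D :\: tight X| * #|X|.
Proof.
move=> /andP [XsubC _].
have -> : #|tight X| = #|D :&: tight X| by rewrite (setIidPr (tight_subset X)).
rewrite mulnC -sum_nat_const (@leq_trans (\sum_(x in X) degIn e D x)) //.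
  apply: leq_sum => x xX; apply: degIn_outside.
  by have := subsetP XsubC x xX; rewrite inE.
rewrite sum_degIn_sym // (big_setID (tight X)) /= -!sum_nat_const.
apply: leq_add; apply: leq_sum => v.
  by rewrite inE => /andP [_]; apply: degIn_tight.
by move=> _; apply/subset_leq_card/subsetIr.
Qed.

End Completion.

Lemma k_tuple_domination_bound :
  0 < k -> 0 < #|T| -> simple_graph e -> min_degree_ge e k.-1 ->
  gamma_xk e k + k.-1 ^ 2 <= k * gamma_k e k.
Proof.
move=> k_gt0 T_gt0 [e_sym e_irr] mindeg.
have [D Ddom <-] := gamma_k_attained.
have k_le_D := k_le_card_k_dominating e_irr T_gt0 mindeg Ddom.
have [X Xcomp Xmin] := arg_minnP (fun X : {set T} => #|X|) (completes_setC D mindeg).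
have count1 := card_minimum_completion D e_sym Xcomp Xmin.
have count2 := double_count_completion D e_sym Ddom Xcomp.
have arith : #|X| + k.-1 ^ 2 <= k.-1 * #|D|.
  by apply: (tight_count_arith _ (card_tight_split D X) count1); rewrite prednK.
have tuple_le := gamma_xk_le (completes_k_tuple D Ddom Xcomp).
have union_le := (leq_card_setU D X).1.
have split_kD : k * #|D| = #|D| + k.-1 * #|D| by rewrite -{1}(prednK k_gt0) mulSn.
lia.
Qed.

End Domination.

Local Open Scope ring_scope.

Theorem mainTheorem1 (k : nat) (T : finType) (e : rel T) :
  (2 <= k)%N -> (0 < #|T|)%N -> simple_graph e -> min_degree_ge e k.-1 ->
  ((gamma_xk e k)%:Z <= (k * gamma_k e k)%:Z - ((k.-1) ^ 2)%:Z).
Proof.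
move=> k_ge2 T_gt0 sg mindeg.
have k_gt0 : (0 < k)%N by apply: leq_trans k_ge2.
by rewrite lerBrDr -PoszD lez_nat k_tuple_domination_bound.
Qed.
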